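(* In the setting below, for each $k\in[d-1]$, let $P_k(t)$ be the orthogonal projector onto the row space of $c_{TT}(t)^{<k>}$, so that $P_k(t)=\tilde X_{\ge k+1}(t)\tilde X_{\ge k+1}(t)^\top$ for the right interface matrix of any minimal right-orthogonal TT decomposition of $c_{TT}(t)$. Then \[\frac{d}{dt}P_k(t)\Big|_{t=0}=(I-\tilde X_{\ge k+1}\tilde X_{\ge k+1}^\top)V_{\ge k+1}R_k^{-1}\tilde X_{\ge k+1}^\top+\tilde X_{\ge k+1}R_k^{-\top}V_{\ge k+1}^\top(I-\tilde X_{\ge k+1}\tilde X_{\ge k+1}^\top),\] where $I=I_{n_{k+1}\cdots n_d}$.
   Context: Fix $d\ge2$, positive integers $n_1,\dots,n_d$, $\mathbf r=(r_1,\dots,r_{d-1})$, $r_0=r_d=1$. Flattenings $Z^{<\mu>}\in\mathbb R^{(n_1\cdots n_\mu)\times(n_{\mu+1}\cdots n_d)}$ use colexicographic order; $\mathcal M_{\mathbf r}$ is the manifold of tensors of TT-rank $(\mathrm{rank}\,Z^{<1>},\dots,\mathrm{rank}\,Z^{<d-1>})=\mathbf r$. $X\in\mathcal M_{\mathbf r}$ has a minimal left-orthogonal TT decomposition $U_1,\dots,U_d$ ($U_k\in\mathbb R^{r_{k-1}\times n_k\times r_k}$, $X(i_1,\dots,i_d)=U_1(i_1)\cdots U_d(i_d)$, $(U_k^L)^\top U_k^L=I$ for $k<d$, $U^L:=U^{<2>}$, $U^R:=U^{<1>}$) and a minimal right-orthogonal decomposition $\tilde U_1,\dots,\tilde U_d$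 ($\tilde U_k^R(\tilde U_k^R)^\top=I$, $k\ge2$). Right interface matrices: $X_{\ge d+1}=1$, $X_{\ge k}^\top=U_k^R(X_{\ge k+1}^\top\otimes I_{n_k})$, and $\tilde X_{\ge k}$ likewise from $\tilde U_k$; $R_k\in\mathbb R^{r_k\times r_k}$ is the invertible matrix with $X_{\ge k+1}=\tilde X_{\ge k+1}R_k$. $V\in\mathrm T_X\mathcal M_{\mathbf r}$ is given by cores $\delta V_k$, $V=\sum_kU_1(i_1)\cdots U_{k-1}(i_{k-1})\delta V_k(i_k)U_{k+1}(i_{k+1})\cdots U_d(i_d)$, $(\delta V_k^L)^\top U_k^L=0$ for $k<d$; $V_{\ge d+1}=0$, $V_{\ge k}^\top=U_k^R(V_{\ge k+1}^\top\otimes I_{n_k})+\delta V_k^R(X_{\ge k+1}^\top\otimes I_{n_k})$. $c_1,\dots,c_d$ are smooth core curves on $(-\epsilon,\epsilon)$ with $c_k(t)=U_k+t\,\delta V_k+O(t^2)$ ($k<d$), $c_d(t)=U_d+t\,\delta V_d$, forming for each $t$ a minimal left-orthogonal TT decomposition of $c_{TT}(t)\in\mathcal M_{\mathbf r}$, where $c_{TT}(t)(i_1,\dots,i_d)=c_1(t)(i_1)\cdots c_d(t)(i_d)$. *)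

From HB Require Import structures.
From mathcomp Require Import all_boot all_order all_algebra.
From mathcomp Require Import all_classical all_reals all_analysis.
Set Implicit Arguments. Unset Strict Implicit. Unset Printing Implicit Defensive.
Import Order.TTheory GRing.Theory Num.Theory.
Import numFieldNormedType.Exports.
Local Open Scope ring_scope.

(* Positions are 1-based: k = 1..d.
   n k = mode size n_k, r k = TT rank r_k (r 0 = r d = 1 is imposed in the
   theorem). *)

Section TT.
Variable R : realType.
Variables n r : nat -> nat.

Definition core := forall k : nat, 'I_(n k) -> 'M[R]_(r k.-1, r k).

(* entry of a matrix at natural-number indices (0 outside the range) *)
Definition mxnth m p (A : 'M[R]_(m, p)) (i j : nat) : R :=
  match (insub i : option 'I_m), (insub j : option 'I_p) with
  | Some i', Some j' => A i' j'
  | _, _ => 0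
  end.

(* slice U_k(i) at a natural-number index (0 outside the range) *)
Definition slice (U : core) (k i : nat) : 'M[R]_(r k.-1, r k) :=
  match (insub i : option 'I_(n k)) with Some o => U k o | None => 0 end.

(* Unfoldings of core k (colexicographic order):
   U^L = U^{<2>} in R^{(r_{k-1} n_k) x r_k}, row (a,i) |-> a + r_{k-1} i;
   U^R = U^{<1>} in R^{r_{k-1} x (n_k r_k)}, column (i,b) |-> i + n_k b. *)
Definition coreL (U : core) (k : nat) : 'M[R]_(r k.-1 * n k, r k) :=
  \matrix_(a, b) mxnth (slice U k (a %/ r k.-1)) (a %% r k.-1) b.
Definition coreR (U : core) (k : nat) : 'M[R]_(r k.-1, n k * r k) :=
  \matrix_(a, b) mxnth (slice U k (b %% n k)) a (b %/ n k).

Definition left_orth (U : core) (k : nat) : Prop :=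
  (coreL U k)^T *m coreL U k = 1%:M.
Definition right_orth (U : core) (k : nat) : Prop :=
  coreR U k *m (coreR U k)^T = 1%:M.

(* tailchain U m k i a = (U_k(i_k) U_{k+1}(i_{k+1}) ... U_{k+m-1}(i_{k+m-1}))_{a,0},
   the chain being closed on the right by the 1x1 matrix 1 (X_{>= d+1} = 1);
   equivalently it is the unfolded recursion
   X_{>=k}^T = U_k^R (X_{>=k+1}^T (x) I_{n_k}) entrywise. *)
Fixpoint tailchain (U : core) (m k : nat) (i : nat -> nat) (a : nat) : R :=
  match m with
  | 0 => (a == 0)%:R
  | m'.+1 => \sum_(b < r k) mxnth (slice U k (i k)) a b * tailchain U m' k.+1 i b
  end.

(* entrywise unfolding of
   V_{>=k}^T = U_k^R (V_{>=k+1}^T (x) I) + dV_k^R (X_{>=k+1}^T (x) I), V_{>=d+1} = 0 *)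
Fixpoint tailchainV (U dV : core) (m k : nat) (i : nat -> nat) (a : nat) : R :=
  match m with
  | 0 => 0
  | m'.+1 => \sum_(b < r k)
      (mxnth (slice U k (i k)) a b * tailchainV U dV m' k.+1 i b
       + mxnth (slice dV k (i k)) a b * tailchain U m' k.+1 i b)
  end.

Definition ttentry (U : core) (d : nat) (i : nat -> nat) : R := tailchain U d 1 i 0.

Definition tdim (k d : nat) : nat := \prod_(k <= j < d.+1) n j.

(* colexicographic decoding: if a encodes (i_k, i_{k+1}, ...) with i_k fastest,
   cdigit k a j = i_j *)
Definition cdigit (k a j : nat) : nat := (a %/ \prod_(k <= l < j) n l) %% n j.

Definition Xge (U : core) (d k : nat) : 'M[R]_(tdim k d, r k.-1) :=
  \matrix_(a, b) tailchain U (d.+1 - k) k (cdigit k a) b.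

Definition Vge (U dV : core) (d k : nat) : 'M[R]_(tdim k d, r k.-1) :=
  \matrix_(a, b) tailchainV U dV (d.+1 - k) k (cdigit k a) b.

Definition flat (U : core) (d mu : nat) : 'M[R]_(tdim 1 mu, tdim mu.+1 d) :=
  \matrix_(a, b) ttentry U d (fun j => if (j <= mu)%N then cdigit 1 a j else cdigit mu.+1 b j).

End TT.

Definition is_orth_proj (R : realType) m p (A : 'M[R]_(m, p)) (P : 'M[R]_p) : Prop :=
  P^T = P /\ P *m P = P /\ (P == A)%MS.

Definition smooth_on (R : realType) (A : set R) (f : R -> R) : Prop :=
  forall m x, A x -> derivable (derive1n m f) x 1.

From HB Require Import structures.
From mathcomp Require Import all_boot all_order all_algebra.
From mathcomp Require Import all_classical all_reals all_analysis.
From mathcomp Require Import ring zify.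
Import Order.TTheory GRing.Theory Num.Theory.
Import numFieldNormedType.Exports.
Local Open Scope ring_scope.
Local Open Scope classical_set_scope.

Set Implicit Arguments.
Unset Strict Implicit.
Unset Printing Implicit Defensive.

(* Write X(t) = X_{>=k+1}(t) for the right interface matrix of c_TT(t).  The
   flattening c_TT(t)^{<k>} factors as X_{<=k}(t) X(t)^T with r_k inner columns,
   so its rank r_k forces P_k(t) = X(t) X(t)^+ with X^+ = (X^T X)^{-1} X^T.  Each
   core is U_j + t dV_j up to O(t^2), hence X is differentiable with X'(0) =
   V_{>=k+1}, and differentiating the projector gives
   (I - X X^+) X' X^+ + (X^+)^T X'^T (I - X X^+).  Finally X(0) = Xt R_k where
   the right-orthogonal interface Xt satisfies Xt^T Xt = I, so that
   X(0)^+ = R_k^{-1} Xt^T and X(0) X(0)^+ = Xt Xt^T. *)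

Lemma bigO_sqr_is_derive {R : realType} (f : R -> R) (u v : R) :
  (fun t => f t - (u + t * v)) =O_ (0 : R) (fun t => t ^+ 2) ->
  f 0 = u /\ is_derive (0 : R) 1 f v.
Proof.
move=> /eqO_exP [K K0 fK].
have f0 : f 0 = u.
  have := nbhs_singleton fK; rewrite /= expr0n /= normr0 mulr0 mul0r addr0.
  by rewrite normr_le0 subr_eq0 => /eqP.
suff dq : (fun h => h^-1 *: (f (h *: 1 + 0) - f 0)) @ 0^' --> v.
  by split => //; apply: DeriveDef; [apply/cvg_ex; exists v|exact: cvg_lim].
have fK' : \forall t \near (0 : R)^', `|f t - (u + t * v)| <= K * `|t ^+ 2|.
  exact: cvg_within.
apply/cvgrPdist_le => e e0; near=> h.
have h0 : h != 0 by near: h; exact: nbhs_dnbhs_neq.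
have -> : v - h^-1 *: (f (h *: 1 + 0) - f 0) = h^-1 * (u + h * v - f h).
  by rewrite f0 addr0 [_ *: 1]mulr1 -[in LHS](mulKf h0 v); rewrite /GRing.scale /=; ring.
rewrite normrM normrV ?unitfE // ler_pdivrMl ?normr_gt0 // distrC.
have fKh : `|f h - (u + h * v)| <= K * `|h ^+ 2| by exact: (near fK' h).
apply: (le_trans fKh).
rewrite normrX expr2 mulrCA ler_wpM2l // mulrC -ler_pdivlMr //.
near: h; apply: cvg_within; apply/nbhs_normP; exists (e / K) => /=; first by rewrite divr_gt0.
by move=> x; rewrite /ball_ /= sub0r normrN => /ltW.
Unshelve. all: by end_near. Qed.

Section matrix_derive.
Context {R : realType} {V : normedModType R}.
Implicit Types (x v : V).

Lemma is_derive_mxP m n (M : V -> 'M[R]_(m, n)) x v M' :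
  is_derive x v M M' <-> forall i j, is_derive x v (fun t => M t i j) (M' i j).
Proof.
split=> [[dM <-] i j|dM].
  rewrite derive_mx // mxE; apply: derivableP.
  by move: i j; apply/derivable_mxP.
have dM' : derivable M x v by apply/derivable_mxP => i j; case: (dM i j).
refine (DeriveDef dM' _); rewrite (derive_mx dM').
apply/(@matrixP R m n) => i j.
by rewrite mxE; case: (dM i j).
Qed.

Lemma is_derive_trmx m n (M : V -> 'M[R]_(m, n)) x v M' :
  is_derive x v M M' -> is_derive x v (fun t => (M t)^T) M'^T.
Proof.
by move/is_derive_mxP=> dM; apply/is_derive_mxP => i j; rewrite mxE; under eq_fun do rewrite mxE.
Qed.

Lemma is_derive_mulmx m n p (A : V -> 'M[R]_(m, n)) (B : V -> 'M[R]_(n, p)) x v A' B' :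
  is_derive x v A A' -> is_derive x v B B' ->
  is_derive x v (fun t => A t *m B t) (A' *m B x + A x *m B').
Proof.
move=> /is_derive_mxP dA /is_derive_mxP dB; apply/is_derive_mxP => i j.
have -> : (fun t => (A t *m B t) i j) = \sum_(l < n) (fun t => A t i l * B t l j).
  by rewrite fct_sumE; apply/funext => t; rewrite mxE.
apply: is_derive_eq; rewrite !mxE -big_split /=; apply: eq_bigr => l _.
by rewrite addrC; congr (_ + _); rewrite [RHS]mulrC.
Qed.

Lemma derivable_det n (A : V -> 'M[R]_n) x v :
  (forall i j, derivable (fun t => A t i j) x v) ->
  derivable (fun t => \det (A t)) x v.
Proof.
move=> dA; rewrite /determinant -fct_sumE.
elim/big_ind: _ => [|f g|s _]; [exact: derivable_cst|exact: derivableD|].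
apply: derivableM; first exact: derivable_cst.
rewrite -fct_prodE; elim/big_ind: _ => [|f g|i _]; [exact: derivable_cst|exact: derivableM|].
exact: dA.
Qed.

Lemma derivable_adj n (A : V -> 'M[R]_n) x v :
  (forall i j, derivable (fun t => A t i j) x v) ->
  forall i j, derivable (fun t => \adj (A t) i j) x v.
Proof.
move=> dA i j.
rewrite (_ : (fun t => _) = fun t => (-1) ^+ (j + i) * \det (row' j (col' i (A t)))); last first.
  by apply/funext => t; rewrite mxE.
apply: derivableM; first exact: derivable_cst.
apply: derivable_det => k l.
have -> : (fun t => row' j (col' i (A t)) k l) = fun t => A t (lift j k) (lift i l).
  by apply/funext => t; rewrite !mxE.
exact: dA.
Qed.

Lemma is_derive_invmx n (G : V -> 'M[R]_n) x v G' :
  is_derive x v G G' -> (\forall t \near x, G t \in unitmx) ->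
  is_derive x v (fun t => invmx (G t)) (- (invmx (G x) *m G' *m invmx (G x))).
Proof.
move=> dG unitG; have Gx := nbhs_singleton unitG.
have dGij i j : derivable (fun t => G t i j) x v.
  by move/is_derive_mxP: dG => /(_ i j) [].
have dinvG : derivable (fun t => invmx (G t)) x v.
  apply: (@near_eq_derivable _ _ _ (fun t => (\det (G t))^-1 *: \adj (G t))).
    by near=> t; rewrite /invmx (near unitG t).
  apply/derivable_mxP => i j.
  rewrite (_ : (fun t => _) = fun t => (\det (G t))^-1 * \adj (G t) i j); last first.
    by apply/funext => t; rewrite mxE.
  apply: derivableM; last exact: derivable_adj dGij i j.
  by apply: derivableV; [rewrite -unitfE -unitmxE|exact: derivable_det dGij].
set D := 'D_v (fun t => invmx (G t)) x.
have : D *m G x + invmx (G x) *m G' = 0.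
  rewrite -(derive_val (is_derive := is_derive_mulmx (derivableP dinvG) dG)).
  apply: derive_val; apply: near_eq_is_derive (is_derive_cst 1%:M _ _).
  by near=> t; rewrite mulVmx // (near unitG t).
move/eqP; rewrite addr_eq0 => /eqP DG.
refine (DeriveDef dinvG _).
by rewrite -/D -[D]mulmx1 -(mulmxV Gx) mulmxA DG !mulNmx.
Unshelve. all: by end_near. Qed.

End matrix_derive.

Lemma sumr_ord_mul (V : nmodType) (F : nat -> V) p q :
  \sum_(a < p * q) F a = \sum_(y < q) \sum_(x < p) F (x + p * y)%N.
Proof.
elim: q => [|q IH]; first by rewrite muln0 !big_ord0.
rewrite mulnSr big_split_ord /= IH big_ord_recr /=; congr (_ + _).
by apply: eq_bigr => x _; rewrite addnC.
Qed.

Lemma modn_colex p x y : (x < p)%N -> ((x + p * y) %% p = x)%N.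
Proof. by move=> xp; rewrite addnC mulnC modnMDl modn_small. Qed.

Lemma divn_colex p x y : (x < p)%N -> ((x + p * y) %/ p = y)%N.
Proof.
by move=> xp; rewrite addnC mulnC divnMDl ?divn_small ?addn0 //; apply: leq_ltn_trans xp.
Qed.

Lemma colex_lt p q x y : (x < p)%N -> (y < q)%N -> (x + p * y < p * q)%N.
Proof.
move=> xp yq; apply: (@leq_trans (p * y.+1)); first by rewrite mulnS ltn_add2r.
by rewrite leq_mul2l yq orbT.
Qed.

Section colex_blocks.
Variable R : realType.

Lemma mxnth_ord m p (A : 'M[R]_(m, p)) (i : 'I_m) (j : 'I_p) : mxnth A i j = A i j.
Proof. by rewrite /mxnth !valK. Qed.

Definition colex_block p q N s (M : 'M[R]_(N, s)) (x : nat) : 'M[R]_(q, s) :=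
  \matrix_(y, b) mxnth M (x + p * y) b.

Lemma trmx_mul_colex p q N s (M : 'M[R]_(N, s)) : N = (p * q)%N ->
  M^T *m M = \sum_(x < p) (colex_block p q M x)^T *m colex_block p q M x.
Proof.
move=> NE; subst N; apply/matrixP => b b'; rewrite !mxE summxE.
pose F a := mxnth M a b * mxnth M a b'.
rewrite (eq_bigr (fun a : 'I_(p * q) => F a)); last by move=> a _; rewrite /F mxE !mxnth_ord.
rewrite sumr_ord_mul exchange_big /=.
by apply: eq_bigr => x _; rewrite !mxE; apply: eq_bigr => y _; rewrite !mxE.
Qed.

End colex_blocks.

Section tt_structure.
Variables (R : realType) (n r : nat -> nat).
Implicit Types (W : core R n r) (i : nat -> nat).

Lemma slice_ord W k (x : 'I_(n k)) : slice W k x = W k x.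
Proof. by rewrite /slice valK. Qed.

Lemma tdimS j d : (j <= d)%N -> tdim n j d = (n j * tdim n j.+1 d)%N.
Proof. by move=> jd; rewrite /tdim big_ltn. Qed.

Lemma cdigit_colex_head j x y : (x < n j)%N -> cdigit n j (x + n j * y) j = x.
Proof. by move=> xn; rewrite /cdigit big_geq // divn1 modn_colex. Qed.

Lemma cdigit_colex_tail j l x y : (x < n j)%N -> (j < l)%N ->
  cdigit n j (x + n j * y) l = cdigit n j.+1 y l.
Proof.
by move=> xn jl; rewrite /cdigit big_ltn // divnMA divn_colex.
Qed.

Fixpoint chain W (m k : nat) i (e : nat -> R) (a : nat) : R :=
  match m with
  | 0 => e a
  | m'.+1 => \sum_(b < r k) mxnth (slice W k (i k)) a b * chain W m' k.+1 i e b
  end.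

Lemma chainS W m k i e a :
  chain W m.+1 k i e a = \sum_(b < r k) mxnth (slice W k (i k)) a b * chain W m k.+1 i e b.
Proof. by []. Qed.

Definition unit_vec (l : nat) : nat -> R := fun b => (b == l)%:R.

Lemma tailchain_chain W m k i a : tailchain W m k i a = chain W m k i (unit_vec 0) a.
Proof. by elim: m k a => [//|m IH] k a /=; apply: eq_bigr => b _; rewrite IH. Qed.

Lemma chain_cat W m1 m2 k i e a :
  chain W (m1 + m2) k i e a = chain W m1 k i (chain W m2 (k + m1) i e) a.
Proof.
elim: m1 k a => [|m1 IH] k a /=; first by rewrite addn0.
by apply: eq_bigr => b _; rewrite IH addSnnS.
Qed.

Lemma chain_linear W m k i e a :
  chain W m.+1 k i e a = \sum_(l < r (k + m)) chain W m.+1 k i (unit_vec l) a * e l.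
Proof.
elim: m k a => [|m IH] k a.
  rewrite addn0; apply: eq_bigr => b _; congr (_ * _).
  rewrite /= (bigD1 b) //= /unit_vec eqxx mulr1 big1 ?addr0 // => c /negPf.
  by rewrite -val_eqE /= => ->; rewrite mulr0.
rewrite chainS -addSnnS; under eq_bigr do rewrite IH mulr_sumr.
rewrite exchange_big; apply: eq_bigr => l _; rewrite chainS mulr_suml.
by apply: eq_bigr => b _; rewrite mulrA.
Qed.

Lemma eq_chain_idx W m k i i' e a :
  (forall j, (k <= j < k + m)%N -> i j = i' j) ->
  chain W m k i e a = chain W m k i' e a.
Proof.
elim: m k a => [//|m IH] k a ii' /=.
rewrite ii' ?leqnn ?addnS ?ltnS ?leq_addr //; apply: eq_bigr => b _.
by rewrite IH // => j /andP[kj jm]; apply: ii'; rewrite ltnW // addnS.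
Qed.

Lemma eq_tailchain_idx W m k i i' a :
  (forall j, (k <= j < k + m)%N -> i j = i' j) ->
  tailchain W m k i a = tailchain W m k i' a.
Proof. by move=> ii'; rewrite !tailchain_chain; apply: eq_chain_idx. Qed.

Definition Xle W k : 'M[R]_(tdim n 1 k, r k) :=
  \matrix_(a, l) chain W k 1 (cdigit n 1 a) (unit_vec l) 0.

Lemma flatE W d k : (0 < k <= d)%N -> flat W d k = Xle W k *m (Xge W d k.+1)^T.
Proof.
case: k => // k /andP[_ kd]; apply/matrixP => a b; rewrite !mxE /ttentry tailchain_chain.
rewrite -{1}(subnKC kd) chain_cat chain_linear; apply: eq_bigr => l _; rewrite !mxE.
congr (_ * _).
  by apply: eq_chain_idx => j /andP[_]; rewrite add1n ltnS => ->.
rewrite tailchain_chain subSS add1n; apply: eq_chain_idx => j /andP[kj _].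
by rewrite leqNgt kj.
Qed.

Lemma Xge_colex_block W d j (x : 'I_(n j)) : (j <= d)%N ->
  colex_block (n j) (tdim n j.+1 d) (Xge W d j) x = Xge W d j.+1 *m (W j x)^T.
Proof.
move=> jd; apply/matrixP => y b; rewrite !mxE /mxnth valK insubT /=.
  by rewrite (tdimS jd) colex_lt.
move=> ?; rewrite !mxE subSn //= cdigit_colex_head ?ltn_ord // slice_ord.
apply: eq_bigr => c _; rewrite !mxE subSS mulrC mxnth_ord; congr (_ * _).
by apply: eq_tailchain_idx => l /andP[jl _]; rewrite cdigit_colex_tail.
Qed.

Lemma coreR_colex_block W j (x : 'I_(n j)) :
  colex_block (n j) (r j) (coreR W j)^T x = (W j x)^T.
Proof.
apply/matrixP => c a; rewrite !mxE /mxnth valK insubT /=; first by rewrite colex_lt.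
move=> ? /=; rewrite !mxE /= modn_colex // divn_colex //.
by rewrite slice_ord mxnth_ord.
Qed.

Lemma Xge_gram_rec W d j : (j <= d)%N ->
  (Xge W d j.+1)^T *m Xge W d j.+1 = 1%:M ->
  (Xge W d j)^T *m Xge W d j = coreR W j *m (coreR W j)^T.
Proof.
move=> jd gram1; rewrite (trmx_mul_colex _ (tdimS jd)) -{1}[coreR W j]trmxK.
rewrite (trmx_mul_colex _ (erefl (n j * r j)%N)); apply: eq_bigr => x _.
rewrite Xge_colex_block // coreR_colex_block trmx_mul trmxK.
by rewrite mulmxA -(mulmxA _ _ (Xge W d j.+1)) gram1 mulmx1.
Qed.

Lemma Xge_gram_end W d : r d = 1%N -> (Xge W d d.+1)^T *m Xge W d d.+1 = 1%:M.
Proof.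
move=> rd; apply/matrixP => b b'; rewrite !mxE.
under eq_bigr do rewrite !mxE subnn /=.
have ord0 (c : 'I_(r d)) : (c : nat) = 0%N by case: c => -[|c] //=; rewrite rd.
by rewrite sumr_const card_ord /tdim big_geq // -val_eqE /= !ord0 !eqxx mulr1.
Qed.

Lemma Xge_orthonormal W d j : r d = 1%N -> (j <= d.+1)%N ->
  (forall l, (j <= l <= d)%N -> right_orth W l) ->
  (Xge W d j)^T *m Xge W d j = 1%:M.
Proof.
move=> rd jd orth; rewrite -(subKn jd) in orth *.
elim: (d.+1 - j)%N (leq_subr j d.+1) orth => [|m IH] md orth.
  by rewrite subn0 Xge_gram_end.
have jm : (d.+1 - m.+1 <= d)%N by rewrite subSS leq_subr.
rewrite Xge_gram_rec //; first by apply: orth; rewrite leqnn.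
rewrite -subSn ?IH ?(ltnW md) // => l /andP[ml ld].
by apply: orth; rewrite ld andbT (leq_trans _ ml) // leq_sub2l.
Qed.

End tt_structure.

Section core_curves.
Variables (R : realType) (V : normedModType R) (n r : nat -> nat).
Variables (c : V -> core R n r) (x v : V) (U dV : core R n r).
(* [core] unfolds to a product whose index argument would otherwise become
   implicit for these variables. *)
Arguments c : clear implicits.
Arguments U : clear implicits.
Arguments dV : clear implicits.

Definition core_velocity j := forall (y : 'I_(n j)) a b,
  c x j y a b = U j y a b /\ is_derive x v (fun t => c t j y a b) (dV j y a b).

Lemma slice_velocity j y a b : core_velocity j ->
  mxnth (slice (c x) j y) a b = mxnth (slice U j y) a b /\
  is_derive x v (fun t => mxnth (slice (c t) j y) a b) (mxnth (slice dV j y) a b).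
Proof.
rewrite /mxnth /slice => cj.
case: (insub y : option 'I_(n j)) => [y'|];
  case: (insub a : option 'I_(r j.-1)) => [a'|]; case: (insub b : option 'I_(r j)) => [b'|];
  rewrite ?mxE; try exact: cj; split=> //; exact: is_derive_cst.
Qed.

Lemma tailchain_velocity m k i a : (forall j, (k <= j < k + m)%N -> core_velocity j) ->
  tailchain (c x) m k i a = tailchain U m k i a /\
  is_derive x v (fun t => tailchain (c t) m k i a) (tailchainV U dV m k i a).
Proof.
elim: m k a => [|m IH] k a cv; first by split => //; exact: is_derive_cst.
have ck : core_velocity k by apply: cv; rewrite leqnn addnS ltnS leq_addr.
have cv' j : (k.+1 <= j < k.+1 + m)%N -> core_velocity j.
  by case/andP=> kj jm; apply: cv; rewrite ltnW // -addSnnS.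
have Sv b := slice_velocity (i k) a b ck.
have Tv b := IH k.+1 b cv'.
split=> /=; first by apply: eq_bigr => b _; rewrite (Sv b).1 (Tv b).1.
have -> : (fun t => tailchain (c t) m.+1 k i a) =
    \sum_(b < r k) (fun t => mxnth (slice (c t) k (i k)) a b * tailchain (c t) m k.+1 i b).
  by rewrite fct_sumE.
apply: is_derive_eq (is_derive_sum (fun b => is_deriveM (Sv b).2 (Tv b).2)) _.
apply: eq_bigr => b _.
by rewrite (Sv b).1 (Tv b).1; congr (_ + _); rewrite [RHS]mulrC.
Qed.

Lemma Xge_velocity d k : (forall j, (k <= j <= d)%N -> core_velocity j) ->
  Xge (c x) d k = Xge U d k /\ is_derive x v (fun t => Xge (c t) d k) (Vge U dV d k).
Proof.
move=> cv.
have cv' j : (k <= j < k + (d.+1 - k))%N -> core_velocity j.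
  by move=> kjd; apply: cv; lia.
have tv a b := tailchain_velocity (cdigit n k a) b cv'.
split; first by apply/matrixP => a b; rewrite !mxE (tv a b).1.
apply/is_derive_mxP => a b; rewrite mxE; under eq_fun do rewrite mxE.
exact: (tv a b).2.
Qed.

End core_curves.

Definition mpinv (R : fieldType) N q (X : 'M[R]_(N, q)) : 'M[R]_(q, N) :=
  invmx (X^T *m X) *m X^T.

Section orth_proj.
Variable R : realFieldType.

Lemma mulmx_trmx_eq0 m N (M : 'M[R]_(m, N)) : M *m M^T = 0 -> M = 0.
Proof.
move/matrixP=> MM0; apply/matrixP => i j; rewrite mxE.
have /psumr_eq0P sq0 : \sum_(l < N) M i l ^+ 2 = 0.
  transitivity ((M *m M^T) i i); last by rewrite MM0 mxE.
  by rewrite mxE; apply: eq_bigr => l _; rewrite mxE expr2.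
by apply/eqP; rewrite -sqrf_eq0 sq0 // => l _; exact: sqr_ge0.
Qed.

Lemma unitmx_trmx_mul N q (X : 'M[R]_(N, q)) : \rank X = q -> X^T *m X \in unitmx.
Proof.
move=> rX; rewrite -row_free_unit; apply: inj_row_free => u uXX0.
have fXT : row_free X^T by rewrite /row_free mxrank_tr rX.
apply/eqP; rewrite -(mulmx_free_eq0 _ fXT); apply/eqP/mulmx_trmx_eq0.
by rewrite trmx_mul trmxK !mulmxA -(mulmxA u) uXX0 mul0mx.
Qed.

Lemma orth_projE N q (P : 'M[R]_N) (X : 'M[R]_(N, q)) :
  P^T = P -> P *m P = P -> (P == X^T)%MS -> \rank X = q -> P = X *m mpinv X.
Proof.
move=> PT PP /eqmxP PX rX.
have [Z PZX] : exists Z, P = Z *m X^T by apply/submxP; rewrite PX.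
have [W XWP] : exists W, X^T = W *m P by apply/submxP; rewrite PX.
have XP : X^T *m P = X^T by rewrite XWP -mulmxA PP.
have PXZ : P = X *m Z^T by rewrite -PT PZX trmx_mul trmxK.
have XXZ : X^T *m X *m Z^T = X^T by rewrite -mulmxA -PXZ XP.
have ZT : Z^T = mpinv X.
  by rewrite /mpinv -[Y in invmx _ *m Y]XXZ mulmxA mulVmx ?mul1mx // unitmx_trmx_mul.
by rewrite PXZ ZT.
Qed.

Lemma eqmx_mulmx_full_rank p q N (L : 'M[R]_(p, q)) (Y : 'M[R]_(q, N)) :
  \rank (L *m Y) = q -> (L *m Y == Y)%MS /\ \rank Y = q.
Proof.
move=> rLY; have sLY := submxMl L Y.
have rY : \rank Y = q by apply/eqP; rewrite eqn_leq rank_leq_row -{1}rLY mxrankM_maxr.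
split=> //; apply/andP; split=> //.
by rewrite -(mxrank_leqif_sup sLY).2 rLY rY.
Qed.

End orth_proj.

Lemma orth_proj_mulmxE (R : realType) p q N (L : 'M[R]_(p, q)) (X : 'M[R]_(N, q)) P :
  is_orth_proj (L *m X^T) P -> \rank (L *m X^T) = q ->
  P = X *m mpinv X /\ X^T *m X \in unitmx.
Proof.
move=> [PT [PP PLX]] /eqmx_mulmx_full_rank [LX]; rewrite mxrank_tr => rX.
split; last exact: unitmx_trmx_mul.
by apply: orth_projE => //; apply/eqmxP; apply: eqmx_trans (eqmxP PLX) (eqmxP LX).
Qed.

Lemma is_derive_col_proj (R : realType) (V : normedModType R) N q
    (X : V -> 'M[R]_(N, q)) X' x v :
  is_derive x v X X' -> (\forall t \near x, (X t)^T *m X t \in unitmx) ->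
  let P0 := X x *m mpinv (X x) in
  is_derive x v (fun t => X t *m mpinv (X t))
    ((1%:M - P0) *m X' *m mpinv (X x) + (mpinv (X x))^T *m X'^T *m (1%:M - P0)).
Proof.
move=> dX unitG P0.
have dXT := is_derive_trmx dX.
have dH := is_derive_invmx (is_derive_mulmx dXT dX) unitG.
apply: is_derive_eq (is_derive_mulmx dX (is_derive_mulmx dH dXT)) _.
rewrite /P0 /mpinv; set H := invmx _.
have HT : H^T = H by rewrite /H trmx_inv trmx_mul trmxK.
rewrite trmx_mul trmxK HT.
rewrite !(mulmxDl, mulmxDr, mulmxBl, mulmxBr, mulNmx, mulmxN, mul1mx, mulmx1, mulmxA).
by rewrite [X in _ = _ + X]addrC opprD !addrA [X in X + _ = _]addrAC.
Qed.

Lemma mpinv_mul_orth (R : fieldType) N q (Y : 'M[R]_(N, q)) (Rk : 'M[R]_q) :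
  Y^T *m Y = 1%:M -> Rk \in unitmx -> mpinv (Y *m Rk) = invmx Rk *m Y^T.
Proof.
move=> YY uRk; rewrite /mpinv.
have GE : (Y *m Rk)^T *m (Y *m Rk) = Rk^T *m Rk.
  by rewrite trmx_mul -mulmxA (mulmxA Y^T) YY mul1mx.
have uG : Rk^T *m Rk \in unitmx by rewrite unitmx_mul unitmx_tr uRk.
rewrite GE -[invmx Rk *m Y^T](mulKmx uG) -!mulmxA (mulmxA Rk) mulmxV // mul1mx.
by rewrite trmx_mul.
Qed.

Theorem lemma19 (R : realType) (d : nat) (n r : nat -> nat)
  (U Ut dV : core R n r) (c : R -> core R n r) (eps : R) (k : nat)
  (Rk : 'M[R]_(r k)) (P : R -> 'M[R]_(tdim n k.+1 d)) :
  (2 <= d)%N ->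
  (forall j, (1 <= j <= d)%N -> (0 < n j)%N) ->
  r 0%N = 1%N -> r d = 1%N ->
  (0 < k < d)%N ->
  (* X = TT(U) lies in M_r and U is a minimal left-orthogonal decomposition *)
  (forall mu, (0 < mu < d)%N -> \rank (flat U d mu) = r mu) ->
  (forall j, (1 <= j < d)%N -> left_orth U j) ->
  (* Ut is a minimal right-orthogonal TT decomposition of the same X *)
  (forall i : nat -> nat, (forall j, (1 <= j <= d)%N -> (i j < n j)%N) ->
     ttentry Ut d i = ttentry U d i) ->
  (forall j, (2 <= j <= d)%N -> right_orth Ut j) ->
  (* R_k : invertible with X_{>=k+1} = Xt_{>=k+1} R_k *)
  Rk \in unitmx ->
  Xge U d k.+1 = Xge Ut d k.+1 *m Rk ->
  (* tangent vector V given by the cores dV *)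
  (forall j, (1 <= j < d)%N -> (coreL dV j)^T *m coreL U j = 0) ->
  (* the core curves c_1, ..., c_d on ]-eps, eps[ *)
  0 < eps ->
  (forall j (i : 'I_(n j)) a b, (1 <= j <= d)%N ->
     smooth_on `]-eps, eps[ (fun t => c t j i a b)) ->
  (forall j (i : 'I_(n j)) a b, (1 <= j < d)%N ->
     (fun t => c t j i a b - (U j i a b + t * dV j i a b)) =O_ (0 : R)
       (fun t => t ^+ 2)) ->
  (forall t, -eps < t < eps -> forall i, c t d i = U d i + t *: dV d i) ->
  (forall t, -eps < t < eps -> forall mu, (0 < mu < d)%N ->
     \rank (flat (c t) d mu) = r mu) ->
  (forall t, -eps < t < eps -> forall j, (1 <= j < d)%N -> left_orth (c t) j) ->
  (* P_k(t) = orthogonal projector onto the row space of c_TT(t)^{<k>} *)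
  (forall t, -eps < t < eps -> is_orth_proj (flat (c t) d k) (P t)) ->
  is_derive (0:R) 1 P
    ((1%:M - Xge Ut d k.+1 *m (Xge Ut d k.+1)^T) *m Vge U dV d k.+1
        *m invmx Rk *m (Xge Ut d k.+1)^T
     + Xge Ut d k.+1 *m (invmx Rk)^T *m (Vge U dV d k.+1)^T
        *m (1%:M - Xge Ut d k.+1 *m (Xge Ut d k.+1)^T)).
Proof.
(* Only the expansions of the cores, the rank and projector data along the
   curve, X_{>=k+1} = Xt_{>=k+1} R_k and the right-orthogonality of Ut enter. *)
move=> _ _ _ rd hk _ _ _ orthUt uRk XR _ eps0 _ expand cd rank _ proj.
have /andP[k0 kd] := hk.
have near_eps : \forall t \near (0 : R), -eps < t < eps.
  apply/nbhs_normP; exists eps => //= t.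
  by rewrite /ball_ /= sub0r normrN ltr_norml.
have velocity j : (k.+1 <= j <= d)%N -> core_velocity c 0 1 U dV j.
  case/andP=> kj jd; have [jd' y a b|dj] := ltnP j d.
    by apply: bigO_sqr_is_derive; apply: expand; rewrite jd' (leq_trans _ kj).
  have jE : j = d by apply/eqP; rewrite eqn_leq jd.
  subst j => y a b; apply: bigO_sqr_is_derive; apply/eqO_exP; exists 1 => //; near=> t.
  by rewrite cd ?(near near_eps t) // !mxE subrr normr0 mul1r normr_ge0.
have [X0 dX] := Xge_velocity velocity.
set X := fun t => Xge (c t) d k.+1.
have projX : \forall t \near (0 : R),
    P t = X t *m mpinv (X t) /\ (X t)^T *m X t \in unitmx.
  near=> t; have t_eps : -eps < t < eps by exact: (near near_eps t).
  have kd' : (0 < k <= d)%N by rewrite k0 ltnW.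
  have := proj t t_eps; rewrite flatE // => /orth_proj_mulmxE.
  by rewrite -flatE // rank // => /(_ erefl).
apply: is_derive_eq (near_eq_is_derive _ (is_derive_col_proj dX _)) _.
- by apply: filterS projX => t [->].
- by apply: filterS projX => t [].
have orthXt : (Xge Ut d k.+1)^T *m Xge Ut d k.+1 = 1%:M.
  apply: Xge_orthonormal => //; first exact: ltnW.
  move=> l /andP[kl ld].
  by apply: orthUt; rewrite ld (leq_trans _ kl).
rewrite /= /X X0 XR mpinv_mul_orth // trmx_mul trmxK.
by rewrite !mulmxA !(mulmxK uRk).
Unshelve. all: by end_near. Qed.
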